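(* Let $n\ge1$, $L,\underline b>0$, and let $(k_p,k_i)\in(0,\infty)^2$ satisfy $k_p^2\underline b>k_pL+k_i+L^2/(4\underline b)$. Then the $2n\times2n$ matrix $$P=\begin{bmatrix}2k_pk_i\underline bI_n&k_iI_n\\k_iI_n&k_pI_n\end{bmatrix}$$ is positive definite. Moreover, there exists $\gamma>0$, depending only on $(k_i,k_p,L,\underline b)$, such that for all $n\times n$ real matrices $a,\theta$ with $\|a\|\le L$ and $\mathrm{Sym}[\theta]\ge\underline bI_n$, the matrix $$A=\begin{bmatrix}0_n&I_n\\-k_i\theta&a-k_p\theta\end{bmatrix}$$ satisfies $PA+A^{\mathsf T}P\le-\gamma I_{2n}$.
   Context: $\|\cdot\|$ is the operator norm induced by the Euclidean norm; $\mathrm{Sym}[\theta]=(\theta+\theta^{\mathsf T})/2$; for symmetric matrices, $S_1\ge S_2$ means $S_1-S_2$ is positive semidefinite; $0_n$ and $I_n$ are the $n\times n$ zero and identity matrices. *)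

From HB Require Import structures.
From mathcomp Require Import all_boot all_order all_algebra.
From mathcomp Require Import classical_sets reals.
Set Implicit Arguments. Unset Strict Implicit. Unset Printing Implicit Defensive.
Import Order.TTheory GRing.Theory Num.Theory.
Local Open Scope ring_scope.
Local Open Scope classical_set_scope.

Section Defs.
Variable R : realType.

Definition eucl_norm (n : nat) (x : 'cV[R]_n) : R :=
  Num.sqrt (\sum_(i < n) x i 0 ^+ 2).

Definition opnorm (m n : nat) (a : 'M[R]_(m, n)) : R :=
  sup [set eucl_norm (a *m x) | x in [set x : 'cV[R]_n | eucl_norm x <= 1]].

Definition qform (n : nat) (S : 'M[R]_n) (x : 'cV[R]_n) : R :=
  ((x^T *m S *m x) 0 0).

Definition loewner_le (n : nat) (S1 S2 : 'M[R]_n) : Prop :=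
  forall x : 'cV[R]_n, 0 <= qform (S2 - S1) x.

Definition posdef (n : nat) (P : 'M[R]_n) : Prop :=
  P^T = P /\ forall x : 'cV[R]_n, x != 0 -> 0 < qform P x.

Definition symmx (n : nat) (th : 'M[R]_n) : 'M[R]_n :=
  2^-1 *: (th + th^T).

Definition Pmat (n : nat) (kp ki bl : R) : 'M[R]_(n + n) :=
  block_mx ((2 * kp * ki * bl)%:M) (ki%:M) (ki%:M) (kp%:M).

Definition Amat (n : nat) (kp ki : R) (a th : 'M[R]_n) : 'M[R]_(n + n) :=
  block_mx 0 1%:M (- (ki *: th)) (a - kp *: th).

End Defs.

From HB Require Import structures.
From mathcomp Require Import all_boot all_order all_algebra.
From mathcomp Require Import classical_sets reals.
From mathcomp Require Import ring lra.
Set Implicit Arguments. Unset Strict Implicit. Unset Printing Implicit Defensive.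
Import Order.TTheory GRing.Theory Num.Theory.
Local Open Scope ring_scope.

(* Writing x = (u, v), the quadratic form of P A + A^T P is
   4 k_p k_i b u.v + 2 k_i |v|^2 + 2 k_i u.(a v) + 2 k_p v.(a v) - 2 w.(theta w)
   with w = k_i u + k_p v.  Bounding w.(theta w) below by b |w|^2 cancels the
   cross terms u.v, and |a v| <= L |v| leaves a form in (u, v, a v) dominated
   by the 2x2 matrix [[2 b k_i^2, k_i L], [k_i L, 2 b k_p^2 - 2 k_i - 2 k_p L]],
   whose determinant is positive exactly under the gain condition.  The same
   2x2 estimate, applied to [[2 k_p k_i b, k_i], [k_i, k_p]], shows that P is
   positive definite. *)

Section DotProduct.
Variable R : comPzRingType.
Implicit Types (n : nat) (c : R).

Definition dot n (p q : 'cV[R]_n) : R := \sum_i p i 0 * q i 0.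

Lemma dotE n (p q : 'cV[R]_n) : (p^T *m q) 0 0 = dot p q.
Proof. by rewrite mxE; apply: eq_bigr => i _; rewrite mxE. Qed.

Lemma dotC n (p q : 'cV[R]_n) : dot p q = dot q p.
Proof. by apply: eq_bigr => i _; rewrite mulrC. Qed.

Lemma dotDl n (p1 p2 q : 'cV[R]_n) : dot (p1 + p2) q = dot p1 q + dot p2 q.
Proof. by rewrite /dot -big_split; apply: eq_bigr => i _; rewrite mxE mulrDl. Qed.

Lemma dotDr n (p q1 q2 : 'cV[R]_n) : dot p (q1 + q2) = dot p q1 + dot p q2.
Proof. by rewrite dotC dotDl !(dotC _ p). Qed.

Lemma dotZl n c (p q : 'cV[R]_n) : dot (c *: p) q = c * dot p q.
Proof. by rewrite /dot mulr_sumr; apply: eq_bigr => i _; rewrite mxE mulrA. Qed.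

Lemma dotZr n c (p q : 'cV[R]_n) : dot p (c *: q) = c * dot p q.
Proof. by rewrite dotC dotZl dotC. Qed.

Lemma dotNl n (p q : 'cV[R]_n) : dot (- p) q = - dot p q.
Proof. by rewrite -scaleN1r dotZl mulN1r. Qed.

Lemma dotNr n (p q : 'cV[R]_n) : dot p (- q) = - dot p q.
Proof. by rewrite dotC dotNl dotC. Qed.

Lemma dot0r n (p : 'cV[R]_n) : dot p 0 = 0.
Proof. by rewrite -(scale0r 0) dotZr mul0r. Qed.

Lemma dot_col_mx n (p1 p2 q1 q2 : 'cV[R]_n) :
  dot (col_mx p1 p2) (col_mx q1 q2) = dot p1 q1 + dot p2 q2.
Proof.
rewrite /dot big_split_ord /=.
by congr (_ + _); apply: eq_bigr => i _; rewrite ?col_mxEu ?col_mxEd.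
Qed.

Lemma dot_mulmxr n (S : 'M[R]_n) (p q : 'cV[R]_n) :
  dot p (S *m q) = dot (S^T *m p) q.
Proof. by rewrite -!dotE trmx_mul trmxK mulmxA. Qed.

End DotProduct.

Section DotProductReal.
Variable R : realFieldType.
Implicit Types (n : nat) (s t c : R).

Lemma dot_ge0 n (p : 'cV[R]_n) : 0 <= dot p p.
Proof. by apply: sumr_ge0 => i _; rewrite -expr2 sqr_ge0. Qed.

Lemma dot_eq0 n (p : 'cV[R]_n) : (dot p p == 0) = (p == 0).
Proof.
apply/idP/eqP => [|->]; last by rewrite dot0r.
rewrite psumr_eq0 => [/allP p0|i _]; last by rewrite -expr2 sqr_ge0.
apply/matrixP => i j; rewrite ord1 mxE.
by have /implyP/(_ isT) := p0 i (mem_index_enum i); rewrite mulf_eq0 orbb => /eqP.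
Qed.

Lemma dot_gt0 n (p : 'cV[R]_n) : p != 0 -> 0 < dot p p.
Proof. by rewrite -dot_eq0 lt_def dot_ge0 andbT. Qed.

Lemma dot_amgm n s t (p q : 'cV[R]_n) :
  2 * s * t * dot p q <= s ^+ 2 * dot p p + t ^+ 2 * dot q q.
Proof.
have := dot_ge0 (s *: p - t *: q).
rewrite !(dotDl, dotDr, dotNl, dotNr, dotZl, dotZr) (dotC q p); lra.
Qed.

Lemma dot_le_of_sqr n c (v w : 'cV[R]_n) :
  0 <= c -> dot w w <= c ^+ 2 * dot v v -> dot v w <= c * dot v v.
Proof.
rewrite le_eqVlt => /predU1P[<- | c_gt0] wv.
  rewrite expr0n mul0r in wv.
  have /eqP -> : w == 0 by rewrite -dot_eq0 eq_le wv dot_ge0.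
  by rewrite dot0r mul0r.
rewrite -(ler_pM2l c_gt0); have := dot_amgm c 1 v w; rewrite expr1n mulr1 mul1r; lra.
Qed.

(* A lower bound for the smallest eigenvalue of [[a, sqrt k], [sqrt k, d]]. *)
Definition quad_gap (a k d : R) : R := (a * d - k) / (a + d).

Lemma quad_gapP a k d : 0 < a -> 0 <= k -> k < a * d ->
  [/\ 0 < quad_gap a k d, quad_gap a k d < a
    & (a - quad_gap a k d) * (d - quad_gap a k d) = k + quad_gap a k d ^+ 2].
Proof.
move=> a_gt0 k_ge0 kad.
have d_gt0 : 0 < d by rewrite -(pmulr_rgt0 _ a_gt0); apply: le_lt_trans kad.
have ad_gt0 : 0 < a + d by rewrite addr_gt0.
split; first by rewrite divr_gt0 // subr_gt0.
  by rewrite ltr_pdivrMr //; nra.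
by rewrite /quad_gap; field; rewrite gt_eqF.
Qed.

Lemma dot_quad_gap n a b d c (u v w : 'cV[R]_n) :
  0 < a -> 0 <= c -> b ^+ 2 * c < a * d -> dot w w <= c * dot v v ->
  quad_gap a (b ^+ 2 * c) d * (dot u u + dot v v)
    <= a * dot u u - 2 * b * dot u w + d * dot v v.
Proof.
move=> a_gt0 c_ge0 kad wv; have k_ge0 : 0 <= b ^+ 2 * c by rewrite mulr_ge0 ?sqr_ge0.
have [g_gt0 g_lt_a g_eq] := quad_gapP a_gt0 k_ge0 kad.
set g := quad_gap _ _ _ in g_gt0 g_lt_a g_eq *.
have a'_gt0 : 0 < a - g by rewrite subr_gt0.
rewrite -subr_ge0 -(pmulr_rge0 _ a'_gt0).
have -> : (a - g) * (a * dot u u - 2 * b * dot u w + d * dot v v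
                     - g * (dot u u + dot v v))
    = (a - g) ^+ 2 * dot u u - 2 * (a - g) * b * dot u w
      + (b ^+ 2 * c + g ^+ 2) * dot v v.
  by rewrite -g_eq; ring.
(* complete the square along (a - g) u - b w *)
have := dot_amgm (a - g) b u w.
have : b ^+ 2 * dot w w <= b ^+ 2 * c * dot v v by rewrite -mulrA ler_wpM2l ?sqr_ge0.
have := mulr_ge0 (sqr_ge0 g) (dot_ge0 v); lra.
Qed.

End DotProductReal.

Section OperatorNorm.
Variable R : realType.
Implicit Types (m n : nat).

Lemma eucl_normE n (x : 'cV[R]_n) : eucl_norm x = Num.sqrt (dot x x).
Proof. by congr Num.sqrt; apply: eq_bigr => i _; rewrite expr2. Qed.

Lemma eucl_normZ n (c : R) (x : 'cV[R]_n) : eucl_norm (c *: x) = `|c| * eucl_norm x.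
Proof.
by rewrite !eucl_normE dotZl dotZr mulrA -expr2 sqrtrM ?sqr_ge0 // sqrtr_sqr.
Qed.

Lemma eucl_norm_gt0 n (x : 'cV[R]_n) : x != 0 -> 0 < eucl_norm x.
Proof. by move=> x0; rewrite eucl_normE sqrtr_gt0 dot_gt0. Qed.

Lemma opnorm_has_sup m n (a : 'M[R]_(m, n)) :
  has_sup [set eucl_norm (a *m x) | x in [set x : 'cV[R]_n | eucl_norm x <= 1]].
Proof.
split; first by exists (eucl_norm (a *m 0)), 0; rewrite //= eucl_normE dot0r sqrtr0.
exists (Num.sqrt (\sum_i (\sum_j `|a i j|) ^+ 2)) => _ [x /= x_le1 <-].
rewrite eucl_normE -sqrtr1 ler_sqrt // in x_le1.
have coord_le1 j : `|x j 0| <= 1.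
  rewrite -(expr_le1 (ltn0Sn 1)) // real_normK ?num_real //.
  apply: le_trans x_le1; rewrite /dot (bigD1 j) //= -expr2 lerDl.
  by apply: sumr_ge0 => i _; rewrite -expr2 sqr_ge0.
rewrite /eucl_norm ler_sqrt ?sumr_ge0 // => [|i _]; last exact: sqr_ge0.
apply: ler_sum => i _; rewrite -real_normK ?num_real // lerXn2r ?nnegrE ?sumr_ge0 //.
rewrite mxE; apply: le_trans (ler_norm_sum _ _ _) _.
by apply: ler_sum => j _; rewrite normrM ler_piMr.
Qed.

Lemma eucl_norm_mulmx_le m n (a : 'M[R]_(m, n)) (x : 'cV[R]_n) :
  eucl_norm (a *m x) <= opnorm a * eucl_norm x.
Proof.
have [-> | x0] := eqVneq x 0.
  by rewrite mulmx0 !eucl_normE !dot0r !sqrtr0 mulr0.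
have nx_gt0 := eucl_norm_gt0 x0.
have : eucl_norm (a *m ((eucl_norm x)^-1 *: x)) <= opnorm a.
  rewrite /opnorm; apply: (sup_upper_bound (opnorm_has_sup a)).
  exists ((eucl_norm x)^-1 *: x) => //=.
  by rewrite eucl_normZ gtr0_norm ?invr_gt0 // mulVf ?gt_eqF.
by rewrite -scalemxAr eucl_normZ gtr0_norm ?invr_gt0 // mulrC ler_pdivrMr.
Qed.

Lemma dot_mulmx_le n (L : R) (a : 'M[R]_n) (v : 'cV[R]_n) :
  0 <= L -> opnorm a <= L -> dot (a *m v) (a *m v) <= L ^+ 2 * dot v v.
Proof.
move=> L_ge0 aL; have := eucl_norm_mulmx_le a v.
move/le_trans/(_ (ler_wpM2r (sqrtr_ge0 _) aL)).
rewrite !eucl_normE -[L in L * _]ger0_norm // -sqrtr_sqr -sqrtrM ?sqr_ge0 //.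
by rewrite ler_sqrt // mulr_ge0 ?sqr_ge0 ?dot_ge0.
Qed.

End OperatorNorm.

Section QuadraticForm.
Variable R : realType.
Implicit Types (n : nat) (c : R).

Lemma qform_dot n (S : 'M[R]_n) x : qform S x = dot x (S *m x).
Proof. by rewrite /qform -mulmxA dotE. Qed.

Lemma qformD n (S1 S2 : 'M[R]_n) x : qform (S1 + S2) x = qform S1 x + qform S2 x.
Proof. by rewrite !qform_dot mulmxDl dotDr. Qed.

Lemma qformZ n c (S : 'M[R]_n) x : qform (c *: S) x = c * qform S x.
Proof. by rewrite !qform_dot -scalemxAl dotZr. Qed.

Lemma qformN n (S : 'M[R]_n) x : qform (- S) x = - qform S x.
Proof. by rewrite -scaleN1r qformZ mulN1r. Qed.

Lemma qformB n (S1 S2 : 'M[R]_n) x : qform (S1 - S2) x = qform S1 x - qform S2 x.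
Proof. by rewrite qformD qformN. Qed.

Lemma qform_scalar n c x : qform (c%:M : 'M[R]_n) x = c * dot x x.
Proof. by rewrite qform_dot mul_scalar_mx dotZr. Qed.

Lemma qform_tr n (S : 'M[R]_n) x : qform S^T x = qform S x.
Proof. by rewrite !qform_dot dot_mulmxr trmxK dotC. Qed.

Lemma qform_symmx n (S : 'M[R]_n) x : qform (symmx S) x = qform S x.
Proof. by rewrite /symmx qformZ qformD qform_tr; field. Qed.

Lemma loewner_le_scalar_symmx n c (S : 'M[R]_n) x :
  loewner_le c%:M (symmx S) -> c * dot x x <= qform S x.
Proof. by move/(_ x); rewrite qformB qform_symmx qform_scalar subr_ge0. Qed.

Lemma loewner_le_neg_scalar n c (S : 'M[R]_n) :
  (forall x, qform S x <= - (c * dot x x)) -> loewner_le S (- c%:M).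
Proof. by move=> Sx x; rewrite qformB qformN qform_scalar subr_ge0. Qed.

End QuadraticForm.

Section LyapunovMatrices.
Variables (R : realType) (n : nat) (kp ki bl : R).
Implicit Types (u v : 'cV[R]_n) (a th : 'M[R]_n).

Lemma Pmat_tr : (Pmat n kp ki bl)^T = Pmat n kp ki bl.
Proof. by rewrite /Pmat tr_block_mx !tr_scalar_mx. Qed.

Lemma qform_Pmat u v :
  qform (Pmat n kp ki bl) (col_mx u v) =
  2 * kp * ki * bl * dot u u + 2 * ki * dot u v + kp * dot v v.
Proof.
rewrite qform_dot /Pmat mul_block_col !mul_scalar_mx dot_col_mx !dotDr !dotZr.
by rewrite (dotC v u); ring.
Qed.

Lemma qform_PA_ATP a th u v :
  qform (Pmat n kp ki bl *m Amat kp ki a th + (Amat kp ki a th)^T *m Pmat n kp ki bl)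
    (col_mx u v) =
  2 * (2 * kp * ki * bl * dot u v + ki * dot v v + ki * dot u (a *m v)
       + kp * dot v (a *m v)) - 2 * qform th (ki *: u + kp *: v).
Proof.
rewrite -{2}Pmat_tr -trmx_mul qformD qform_tr qform_dot -mulmxA /Pmat /Amat.
rewrite !mul_block_col !mul_scalar_mx mul0mx add0r !scale1r !dot_col_mx.
rewrite mulNmx mulmxBl -!scalemxAl qform_dot mulmxDr -!scalemxAr.
by rewrite !(dotDl, dotDr, dotZl, dotZr, dotNr, dotNl); ring.
Qed.

End LyapunovMatrices.

Section GainArithmetic.
Variables (R : realFieldType) (L bl kp ki : R).

Lemma gain_Pmat_det : 0 < L -> 0 < bl -> 0 < kp -> 0 < ki ->
  kp * L + ki + L ^+ 2 / (4 * bl) < kp ^+ 2 * bl ->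
  ki ^+ 2 < 2 * kp * ki * bl * kp.
Proof.
move=> L_gt0 bl_gt0 kp_gt0 ki_gt0 gain.
have : 0 <= L ^+ 2 / (4 * bl) by rewrite divr_ge0 ?sqr_ge0 // mulr_ge0 // ltW.
have : 0 < kp * L by rewrite mulr_gt0.
have : 0 < kp ^+ 2 * bl by rewrite mulr_gt0 ?exprn_gt0.
nra.
Qed.

Lemma gain_decay_det : 0 < bl -> 0 < ki ->
  kp * L + ki + L ^+ 2 / (4 * bl) < kp ^+ 2 * bl ->
  ki ^+ 2 * L ^+ 2 < 2 * bl * ki ^+ 2 * (2 * bl * kp ^+ 2 - 2 * ki - 2 * kp * L).
Proof.
move=> bl_gt0 ki_gt0 gain.
have : L ^+ 2 / (4 * bl) < kp ^+ 2 * bl - kp * L - ki by lra.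
rewrite ltr_pdivrMr ?mulr_gt0 // -(ltr_pM2l (exprn_gt0 2 ki_gt0)).
by congr (_ < _); ring.
Qed.

End GainArithmetic.

Section GainCondition.
Variables (R : realType) (L bl kp ki : R).
Hypotheses (L_gt0 : 0 < L) (bl_gt0 : 0 < bl) (kp_gt0 : 0 < kp) (ki_gt0 : 0 < ki).
Hypothesis gain : kp * L + ki + L ^+ 2 / (4 * bl) < kp ^+ 2 * bl.

Definition decay_rate : R :=
  quad_gap (2 * bl * ki ^+ 2) (ki ^+ 2 * L ^+ 2) (2 * bl * kp ^+ 2 - 2 * ki - 2 * kp * L).

Lemma decay_rate_gt0 : 0 < decay_rate.
Proof.
have a_gt0 : 0 < 2 * bl * ki ^+ 2 by rewrite !mulr_gt0 ?exprn_gt0.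
have k_ge0 : 0 <= ki ^+ 2 * L ^+ 2 by rewrite mulr_ge0 ?sqr_ge0.
by have [] := quad_gapP a_gt0 k_ge0 (gain_decay_det bl_gt0 ki_gt0 gain).
Qed.

Lemma Pmat_posdef n : posdef (Pmat n kp ki bl).
Proof.
split=> [|x x0]; first exact: Pmat_tr.
rewrite -(vsubmxK x) qform_Pmat; set u := usubmx x; set v := dsubmx x.
have uv_gt0 : 0 < dot u u + dot v v by rewrite -dot_col_mx vsubmxK dot_gt0.
have kad : (- ki) ^+ 2 * 1 < 2 * kp * ki * bl * kp.
  by rewrite sqrrN mulr1; apply: gain_Pmat_det gain.
have a_gt0 : 0 < 2 * kp * ki * bl by rewrite !mulr_gt0.
have k_ge0 : 0 <= (- ki) ^+ 2 * 1 by rewrite mulr1 sqr_ge0.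
have [g_gt0 _ _] := quad_gapP a_gt0 k_ge0 kad.
have vv_le : dot v v <= 1 * dot v v by rewrite mul1r.
have := dot_quad_gap u a_gt0 ler01 kad vv_le.
have := mulr_gt0 g_gt0 uv_gt0; lra.
Qed.

Lemma PA_ATP_le n (a th : 'M[R]_n) :
  opnorm a <= L -> loewner_le bl%:M (symmx th) ->
  loewner_le (Pmat n kp ki bl *m Amat kp ki a th + (Amat kp ki a th)^T *m Pmat n kp ki bl)
             (- decay_rate%:M).
Proof.
move=> aL th_ge; apply: loewner_le_neg_scalar => x.
rewrite -(vsubmxK x) dot_col_mx qform_PA_ATP.
set u := usubmx x; set v := dsubmx x.
have av_le := dot_mulmx_le v (ltW L_gt0) aL.
have a_gt0 : 0 < 2 * bl * ki ^+ 2 by rewrite !mulr_gt0 ?exprn_gt0.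
have kad := gain_decay_det bl_gt0 ki_gt0 gain.
have coercive := dot_quad_gap u a_gt0 (sqr_ge0 L) kad av_le.
have vav_le := ler_wpM2l (ltW kp_gt0) (dot_le_of_sqr (ltW L_gt0) av_le).
have := loewner_le_scalar_symmx (ki *: u + kp *: v) th_ge.
rewrite !(dotDl, dotDr, dotZl, dotZr) (dotC v u) /decay_rate; lra.
Qed.

End GainCondition.

Theorem proposition4p4 (R : realType) (L bl kp ki : R) :
  0 < L -> 0 < bl -> 0 < kp -> 0 < ki ->
  kp * L + ki + L ^+ 2 / (4 * bl) < kp ^+ 2 * bl ->
  (forall n : nat, (1 <= n)%N -> posdef (Pmat n kp ki bl)) /\
  exists gamma : R, 0 < gamma /\
    forall (n : nat), (1 <= n)%N ->
    forall a theta : 'M[R]_n,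
      opnorm a <= L -> loewner_le (bl%:M) (symmx theta) ->
      loewner_le (Pmat n kp ki bl *m Amat kp ki a theta
                  + (Amat kp ki a theta)^T *m Pmat n kp ki bl)
                 (- (gamma%:M)).
Proof.
move=> L_gt0 bl_gt0 kp_gt0 ki_gt0 gain; split=> [n _ | ].
  exact: Pmat_posdef L_gt0 bl_gt0 kp_gt0 ki_gt0 gain n.
exists (decay_rate L bl kp ki); split; first exact: decay_rate_gt0 bl_gt0 ki_gt0 gain.
move=> n _ a th; exact: PA_ATP_le L_gt0 bl_gt0 kp_gt0 ki_gt0 gain n a th.
Qed.
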